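(* Let $(\Omega,\mathcal A,\mu)$ be a measure space, $X$ a real locally convex space, and $L$ a locally convex space of $\mathcal A$-measurable functions $u:\Omega\to X$ such that (a) $L$ is barreled; (b) for every $A\in\mathcal A$ the map $L\to L$, $u\mapsto\chi_Au$, is defined and continuous; (c) for every $u\in L$ the family $\{\chi_Au:A\in\mathcal A\}$ is bounded in $L$. Let $(\Omega_\alpha)$ be an isotone (or antitone) net in $\mathcal A$. Then the multiplication operators $M_\alpha:L\to L$, $u\mapsto\chi_{\Omega_\alpha}u$, are linear and continuous, and their adjoints $P_\alpha:L'\to L'$ converge pointwise in $\sigma(L',L)$ to a linear, continuous projector $P:L'\to L'$. If moreover $\|\cdot\|_L$ is a seminorm on $L$ such that $\max\{\|u\|_L,\|v\|_L\}\le1$ and $A\in\mathcal A$ imply $\|\chi_Au+\chi_{\Omega\setminus A}v\|_L\le1$, and $\|u'\|_{L'}=\sup_{\|u\|_L\le1}\langle u',u\rangle$ denotes the dual seminorm, then $\|u'\|_{L'}=\|Pu'\|_{L'}+\|(1-P)u'\|_{L'}$ for all $u'\in L'$. *)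

From HB Require Import structures.
From mathcomp Require Import all_boot all_order all_algebra.
From mathcomp Require Import all_classical all_reals all_analysis.
Set Implicit Arguments. Unset Strict Implicit. Unset Printing Implicit Defensive.
Import Order.TTheory GRing.Theory Num.Theory.
Import numFieldNormedType.Exports.
Local Open Scope classical_set_scope.
Local Open Scope ring_scope.

Section tvs_defs.
Context {R : realType} {E : tvsType R}.

Definition balanced (B : set E) : Prop :=
  forall (l : R) (u : E), `|l| <= 1 -> B u -> B (l *: u).

Definition absorbing (B : set E) : Prop :=
  forall u : E, exists2 r : R, 0 < r & forall l : R, `|l| <= r -> B (l *: u).

Definition barrel (B : set E) : Prop :=
  [/\ closed B, convex_set (B : set (convex_lmodType E)), balanced B & absorbing B].

Definition barreled : Prop := forall B : set E, barrel B -> nbhs (0 : E) B.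

Definition tvs_bounded (B : set E) : Prop :=
  forall U : set E, nbhs (0 : E) U ->
    exists2 r : R, 0 < r & forall l : R, r <= `|l| -> B `<=` (fun x => l *: x) @` U.

Definition cont_dual (f : E -> R) : Prop :=
  (forall (a : R) (u v : E), f (a *: u + v) = a * f u + f v) /\ continuous f.

(** continuity of a map E' -> E' for the strong topology beta(E', E), whose
    neighbourhoods of 0 are generated by the polars of bounded sets *)
Definition strong_dual_continuous (P : (E -> R) -> (E -> R)) : Prop :=
  forall B : set E, tvs_bounded B ->
    exists2 B1 : set E, tvs_bounded B1 &
      forall f : E -> R, cont_dual f -> (forall u, B1 u -> `|f u| <= 1) ->
        forall u, B u -> `|P f u| <= 1.

Definition is_seminorm (n : E -> R) : Prop :=
  (forall u v : E, n (u + v) <= n u + n v) /\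
  (forall (a : R) (u : E), n (a *: u) = `|a| * n u).

Definition dual_seminorm (n : E -> R) (f : E -> R) : \bar R :=
  ereal_sup [set (f u)%:E | u in [set u | n u <= 1]].

End tvs_defs.

Definition top_measurable_fun {d} {T : measurableType d} {R : realType}
  {X : tvsType R} (f : T -> X) : Prop :=
  forall U : set X, open U -> measurable (f @^-1` U).

Definition directed {dI} (I : porderType dI) : Prop :=
  inhabited I /\ forall a b : I, exists c : I, (a <= c)%O /\ (b <= c)%O.

Definition net_cvg {dI} {I : porderType dI} {R : realType} (x : I -> R) (l : R) : Prop :=
  forall e : R, 0 < e -> exists a0 : I, forall a : I, (a0 <= a)%O -> `|x a - l| < e.

(* For f in L' and u in L, the set function A |-> f (1_A u) is finitely additive
   and, by (c), bounded.  Along a monotone net of sets its values therefore form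
   a Cauchy net (otherwise disjoint increments of size at least e would pile up
   beyond the bound), and P f u is defined as the limit.  P f is continuous
   because L is barreled: {u | |f (1_(Om a) u)| <= 1 for all a} is a barrel on
   which |P f| <= 1; strong continuity is the same argument with the barrel of
   all u whose images 1_(Om a) u lie in a closed absolutely convex
   0-neighbourhood.  For the norm identity, 1_(Om a) u + 1_(~ Om a) v lies in
   the unit ball whenever u and v do, and f of it tends to P f u + (f - P f) v. *)

From HB Require Import structures.
From mathcomp Require Import all_boot all_order all_algebra.
From mathcomp Require Import all_classical all_reals all_analysis.
From mathcomp Require Import lra ring.
Import Order.TTheory GRing.Theory Num.Theory.
Import numFieldNormedType.Exports.
Local Open Scope classical_set_scope.
Local Open Scope ring_scope.

Section LinearFunctions.
Context {R : pzRingType} {U V : lmodType R} {f : U -> V}.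
Hypothesis f_lin : linear f.

Lemma linear_fun0 : f 0 = 0.
Proof.
apply/esym; have := f_lin 1 0 0; rewrite !scale1r addr0.
by move=> /(congr1 (fun x => x - f 0)); rewrite subrr addrK.
Qed.

Lemma linear_funZ a u : f (a *: u) = a *: f u.
Proof. by have := f_lin a u 0; rewrite !addr0 linear_fun0 addr0. Qed.
End LinearFunctions.

Section ConvexSet.
Context {R : numDomainType} {E : lmodType R}.
Local Open Scope convex_scope.

Lemma convex_setP (K : set E) :
  convex_set (K : set (convex_lmodType E)) <->
  (forall (x y : E) (t : R), 0 <= t -> t <= 1 -> K x -> K y -> K (t *: x + (1 - t) *: y)).
Proof.
split=> [cK x y t t0 t1 Kx Ky | cK x y p].
  by have := cK x y (Itv01 t0 t1); rewrite !inE; apply.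
by rewrite !inE => Kx Ky; apply: cK.
Qed.

End ConvexSet.

Section LocallyConvexSpace.
Context {R : realType} {E : tvsType R}.

Lemma scaler_tvs_continuous (l : R) : continuous (fun x : E => l *: x).
Proof.
move=> x; have [->|l0] := eqVneq l 0.
  by under eq_fun do rewrite scale0r; rewrite ?scale0r; exact: cvg_cst.
move=> B /= /(nbhsZ (invr_neq0 l0)); rewrite scalerA mulVf // scale1r.
by apply: filterS => _ [y By <-]; rewrite /= scalerA divff // scale1r.
Qed.

Lemma affine_tvs_continuous (l : R) (c : E) : continuous (fun x : E => l *: x + c).
Proof.
move=> x B /= Bn.
have : nbhs (l *: x) [set y | B (y + c)].
  have := nbhsB (z := l *: x + c) (- c) Bn; rewrite addrC addrK.
  by apply: filterS => _ [z Bz <-]; rewrite /= addrC addNKr.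
exact: (scaler_tvs_continuous l x).
Qed.

Lemma closure_sub_preimage {h : E -> E} {S K : set E} :
  continuous h -> closed S -> (forall x, K x -> S (h x)) ->
  forall x, closure K x -> S (h x).
Proof.
move=> hc Sc KS; suff : closure K `<=` h @^-1` S by [].
rewrite [X in _ `<=` X](closure_id _).1; first exact: closureS.
exact: preimage_closed.
Qed.

Lemma closure_balanced (K : set E) : balanced K -> balanced (closure K).
Proof.
move=> bK l u l1; apply: (closure_sub_preimage (scaler_tvs_continuous l)).
- exact: closed_closure.
- by move=> x Kx; apply: subset_closure; exact: bK.
Qed.

Lemma closure_convex (K : set E) : convex_set (K : set (convex_lmodType E)) ->
  convex_set (closure K : set (convex_lmodType E)).
Proof.
rewrite !convex_setP => cK x y t t0 t1 Kx Ky.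
have cKy : K `<=` [set x' | closure K (t *: x' + (1 - t) *: y)].
  move=> x' Kx' /=; rewrite (addrC (t *: x')).
  apply: (closure_sub_preimage (affine_tvs_continuous (1 - t) (t *: x'))
    (@closed_closure _ K)) Ky => z Kz.
  by apply: subset_closure; rewrite addrC; exact: cK.
exact: (closure_sub_preimage (affine_tvs_continuous t ((1 - t) *: y))
  (@closed_closure _ K) cKy).
Qed.

Lemma convex_symmetric_balanced (K : set E) :
  convex_set (K : set (convex_lmodType E)) -> K 0 -> (forall x, K x -> K (- x)) ->
  balanced K.
Proof.
rewrite convex_setP => cK K0 KN l u l1 Ku.
have [l0|l0] := leP 0 l.
  have := cK u 0 l l0 _ Ku K0; rewrite scaler0 addr0; apply.
  by rewrite -(ger0_norm l0).
have := cK (- u) 0 (- l) _ _ (KN _ Ku) K0.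
rewrite scaler0 addr0 scaleNr scalerN opprK; apply; first by rewrite oppr_ge0 ltW.
by rewrite -(ltr0_norm l0).
Qed.

Lemma nbhs0_closed_convex_balanced {U : set E} : nbhs (0 : E) U ->
  exists C : set E, [/\ nbhs (0 : E) C, closed C,
    convex_set (C : set (convex_lmodType E)), balanced C & C `<=` U].
Proof.
move=> U0.
have [V V0 VU] : filter_from (nbhs (0 : E)) closure U by exact: (@uniform_regular E 0).
have [B Bcvx [Bopen Bbasis]] := @locally_convex R E.
have [W [BW W0] WV] := Bbasis 0 V V0.
have nW : nbhs (0 : E) W by apply: open_nbhs_nbhs; split => //; exact: Bopen.
have /convex_setP cW : convex_set (W : set (convex_lmodType E)).
  by apply: Bcvx; rewrite inE.
pose K := [set x : E | W x /\ W (- x)].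
have nK : nbhs (0 : E) K.
  by apply: filterI => //; have := @opp_continuous E 0 W; rewrite oppr0; exact.
have cK : convex_set (K : set (convex_lmodType E)).
  apply/convex_setP => x y t t0 t1 [Wx Wnx] [Wy Wny]; split; first exact: cW.
  by rewrite opprD -!scalerN; exact: cW.
exists (closure K); split.
- by apply: filterS nK; exact: subset_closure.
- exact: closed_closure.
- exact: closure_convex.
- apply: closure_balanced; apply: convex_symmetric_balanced => //.
    by split; rewrite ?oppr0; exact: nbhs_singleton.
  by move=> x [Wx Wnx]; split; rewrite ?opprK.
- by apply: subset_trans VU; apply: closureS => x [Wx _]; exact: WV.
Qed.

Lemma cont_dual_linear {f : E -> R} : cont_dual f ->
  [/\ f 0 = 0, forall u v, f (u + v) = f u + f v & forall a u, f (a *: u) = a * f u].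
Proof.
move=> [fl _]; have f0 : f 0 = 0.
  by have := fl 1 0 0; rewrite scale1r addr0 mul1r -{1}[f 0]addr0 => /addrI /esym.
split => // [u v|a u]; first by have := fl 1 u v; rewrite scale1r mul1r.
by have := fl a u 0; rewrite !addr0 f0 addr0.
Qed.

Lemma cont_dual_bounded {f : E -> R} {B : set E} : cont_dual f -> tvs_bounded B ->
  exists2 C, 0 < C & forall u, B u -> `|f u| <= C.
Proof.
move=> cf bB; have [f0 _ fZ] := cont_dual_linear cf.
have f_nbhs0 : nbhs (0 : E) [set u | `|f u| < 1].
  have /cvgrPdist_lt /(_ 1 ltr01) := cf.2 0.
  by rewrite f0; apply: filterS => u; rewrite sub0r normrN.
have [r r0 Br] := bB _ f_nbhs0.
exists r => // u /(Br r); rewrite gtr0_norm // lexx => /(_ isT) [w /= fw <-].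
by rewrite fZ normrM gtr0_norm // -{2}(mulr1 r) ler_wpM2l // ltW.
Qed.

Lemma linear_le1_nbhs0_continuous {g : E -> R} {W : set E} :
  (forall a u v, g (a *: u + v) = a * g u + g v) ->
  nbhs (0 : E) W -> (forall u, W u -> `|g u| <= 1) -> continuous g.
Proof.
move=> gl W0 gW x; apply/cvgrPdist_lt => e e0.
have e20 : 0 < e / 2 by rewrite divr_gt0.
have := nbhsB x (nbhs0Z (lt0r_neq0 e20) W0); rewrite addr0.
apply: filterS => _ [_ [w Ww <-] <-] /=.
rewrite [x + _]addrC gl opprD addrCA subrr addr0 normrN normrM gtr0_norm //.
apply: (@le_lt_trans _ _ (e / 2)); first by rewrite -[leRHS]mulr1 ler_wpM2l ?(ltW e20) ?gW.
by rewrite ltr_pdivrMr // ltr_pMr // ltr1n.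
Qed.

Lemma preimage_barrel (F : tvsType R) (J : Type) (h : J -> E -> F) (C : set F) :
  (forall j, linear (h j)) -> (forall j, continuous (h j)) ->
  closed C -> convex_set (C : set (convex_lmodType F)) -> balanced C ->
  (forall u, exists2 r, 0 < r & forall j (l : R), `|l| <= r -> C (l *: h j u)) ->
  barrel [set u | forall j, C (h j u)].
Proof.
move=> h_lin h_cont Ccl /convex_setP Ccvx Cbal Cabs; split.
- have -> : [set u | forall j, C (h j u)] = \bigcap_j (h j @^-1` C).
    by apply/seteqP; split => [u Cu j _ | u Cu j]; [exact: Cu | exact: (Cu j)].
  by apply: closed_bigI => j _; apply: preimage_closed => // u _; exact: h_cont.
- apply/convex_setP => x y t t0 t1 Cx Cy j.
  by rewrite h_lin !(linear_funZ (h_lin j)); exact: Ccvx.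
- by move=> l u l1 Cu j; rewrite (linear_funZ (h_lin j)); exact: Cbal.
- move=> u; have [r r0 Cr] := Cabs u; exists r => // l lr j.
  by rewrite (linear_funZ (h_lin j)); exact: Cr.
Qed.

Lemma dual_seminormD_le (n g h : E -> R) :
  (dual_seminorm n (fun u => (g u + h u)%R) <= dual_seminorm n g + dual_seminorm n h)%E.
Proof.
apply: ge_ereal_sup => _ [u nu <-]; rewrite EFinD.
by apply: leeD; apply: ereal_sup_ubound; exists u.
Qed.

Lemma dual_seminorm_add_le (n g h : E -> R) (s : \bar R) : n 0 <= 1 ->
  (forall u v, n u <= 1 -> n v <= 1 -> ((g u + h v)%:E <= s)%E) ->
  (dual_seminorm n g + dual_seminorm n h <= s)%E.
Proof.
move=> n0 ghs; case: s ghs => [s| |] ghs; last 2 first.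
- by rewrite leey.
- by have := ghs 0 0 n0 n0.
have g_le v : n v <= 1 -> (dual_seminorm n g <= (s - h v)%:E)%E.
  move=> nv; apply: ge_ereal_sup => _ [u nu <-]; rewrite lee_fin.
  by have := ghs u v nu nv; rewrite lee_fin; lra.
have g_ge : ((g 0)%:E <= dual_seminorm n g)%E by apply: ereal_sup_ubound; exists 0.
have := g_le 0 n0; move: g_ge g_le.
case: (dual_seminorm n g) => [s1| |] // g_ge g_le _.
have h_le : (dual_seminorm n h <= (s - s1)%:E)%E.
  apply: ge_ereal_sup => _ [v nv <-]; rewrite lee_fin.
  by have := g_le v nv; rewrite lee_fin; lra.
by apply: le_trans (leeD (lexx _) h_le) _; rewrite -EFinD lee_fin; lra.
Qed.
End LocallyConvexSpace.

Section Nets.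
Context {R : realType} {dI : Order.disp_t} {I : porderType dI}.
Hypothesis I_dir : directed I.
Implicit Types (x y : I -> R) (c l k M : R).

Definition net_cauchy x :=
  forall e, 0 < e -> exists a0, forall b, (a0 <= b)%O -> `|x b - x a0| < e.

Lemma net_cvg_unique {x l k} : net_cvg x l -> net_cvg x k -> l = k.
Proof.
move=> xl xk; apply: contrapT => /eqP lk.
have d0 : 0 < `|l - k| / 2 by rewrite divr_gt0 // normr_gt0 subr_eq0.
have [a1 h1] := xl _ d0; have [a2 h2] := xk _ d0.
have [a [a1a a2a]] := I_dir.2 a1 a2.
have := ler_distD (x a) l k; rewrite [`|l - x a|]distrC.
have := h1 a a1a; have := h2 a a2a; lra.
Qed.

Lemma net_cauchy_cvg {x} : net_cauchy x -> exists l, net_cvg x l.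
Proof.
move=> H.
pose E := [set y : R | exists a0, forall b, (a0 <= b)%O -> y <= x b].
have ubE a0 e : (forall b, (a0 <= b)%O -> `|x b - x a0| < e) -> ubound E (x a0 + e).
  move=> ha y [a2 h2]; have [c [ac0 ac2]] := I_dir.2 a0 a2.
  have := ha c ac0; have := h2 c ac2; rewrite ltr_norml; lra.
have [a1 h1] := H 1 ltr01.
have hasE : has_ubound E by exists (x a1 + 1); exact: ubE.
have neE : E !=set0 by exists (x a1 - 1), a1 => b /h1; rewrite ltr_norml; lra.
exists (sup E) => e e0.
have e20 : 0 < e / 2 by rewrite divr_gt0.
have [a0 h0] := H _ e20.
have le1 : sup E <= x a0 + e / 2 by apply: ge_sup => //; exact: ubE.
have le2 : x a0 - e / 2 <= sup E.
  by apply: ub_le_sup => //; exists a0 => b /h0; rewrite ltr_norml; lra.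
by exists a0 => b /h0; rewrite !ltr_norml; lra.
Qed.

Lemma net_cvg_cst c : net_cvg (fun _ : I => c) c.
Proof. by move=> e e0; case: I_dir => -[a0] _; exists a0 => a _; rewrite subrr normr0. Qed.

Lemma net_cvg_lin {c x y l k} : net_cvg x l -> net_cvg y k ->
  net_cvg (fun a => c * x a + y a) (c * l + k).
Proof.
move=> xl yk e e0.
have c1 : 0 < `|c| + 1 by rewrite ltr_wpDl.
have e20 : 0 < e / 2 by rewrite divr_gt0.
have [a1 h1] := xl (e / 2 / (`|c| + 1)) (divr_gt0 e20 c1).
have [a2 h2] := yk (e / 2) e20.
have [a0 [a10 a20]] := I_dir.2 a1 a2.
exists a0 => a a0a; have := h2 a (le_trans a20 a0a).
have := h1 a (le_trans a10 a0a); rewrite ltr_pdivlMr // => hx hy.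
have -> : c * x a + y a - (c * l + k) = c * (x a - l) + (y a - k) by ring.
rewrite (le_lt_trans (ler_normD _ _)) // normrM.
have : `|c| * `|x a - l| <= `|x a - l| * (`|c| + 1).
  by rewrite mulrC ler_wpM2l // lerDl.
lra.
Qed.

Lemma net_cvg_eventually {x y l a0} : (forall b, (a0 <= b)%O -> x b = y b) ->
  net_cvg y l -> net_cvg x l.
Proof.
move=> xy yl e e0; have [a1 h1] := yl e e0.
have [c [a0c a1c]] := I_dir.2 a0 a1.
by exists c => b cb; rewrite xy; [exact: h1 (le_trans a1c cb) | exact: le_trans a0c cb].
Qed.

Lemma net_cvg_le {x l M} : (forall a, x a <= M) -> net_cvg x l -> l <= M.
Proof.
move=> xM xl; rewrite leNgt; apply/negP => Ml.
have lM0 : 0 < l - M by rewrite subr_gt0.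
have [a0 h] := xl _ lM0.
by have := h a0 (lexx _); have := xM a0; rewrite ltr_norml; lra.
Qed.

Lemma net_cvg_lee {x l} {M : \bar R} : (forall a, ((x a)%:E <= M)%E) -> net_cvg x l ->
  (l%:E <= M)%E.
Proof.
case: M => [M| |] xM xl; last 2 first.
- by rewrite leey.
- by case: I_dir => -[a0] _; have := xM a0.
by rewrite lee_fin; apply: net_cvg_le xl => a; rewrite -lee_fin.
Qed.

Lemma net_cvg_norm_le {x l M} : (forall a, `|x a| <= M) -> net_cvg x l -> `|l| <= M.
Proof.
move=> xM xl; rewrite ler_norml; apply/andP; split; last first.
  by apply: net_cvg_le xl => a; have := xM a; rewrite ler_norml; lra.
have Nxl : net_cvg (fun a => -1 * x a + 0) (-1 * l + 0).
  exact/net_cvg_lin/net_cvg_cst.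
suff : -1 * l + 0 <= M by lra.
by apply: net_cvg_le Nxl => a; have := xM a; rewrite ler_norml; lra.
Qed.
End Nets.

Section BoundedAdditiveSetFunction.
Context {R : realType} {d : measure_display} {T : measurableType d}.
Context {dI : Order.disp_t} {I : porderType dI}.
Hypothesis I_dir : directed I.
Variables (nu : set T -> R) (M : R).
Hypothesis nuU : forall A B, measurable A -> measurable B -> A `&` B = set0 ->
  nu (A `|` B) = nu A + nu B.
Hypothesis nu_bounded : forall A, measurable A -> `|nu A| <= M.

Section Isotone.
Variable Om : I -> set T.
Hypothesis Om_meas : forall a, measurable (Om a).
Hypothesis Om_iso : forall a b, (a <= b)%O -> Om a `<=` Om b.

(* If the net keeps growing by pieces of mass at least [e], pieces of the same
   sign pile up into sets of arbitrarily large mass. *)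
Lemma isotone_increments_unbounded {e : R} :
  (forall a0, exists b, (a0 <= b)%O /\ e <= `|nu (Om b `\` Om a0)|) ->
  forall (k : nat) a0, exists a, (a0 <= a)%O /\ exists S1 S2,
    [/\ measurable S1, measurable S2, S1 `<=` Om a `\` Om a0, S2 `<=` Om a `\` Om a0 &
        k%:R * e <= nu S1 - nu S2].
Proof.
move=> far; elim=> [|k IH] a0.
  exists a0; split => //; exists set0, set0.
  by split; rewrite ?mul0r ?subrr //; exact: sub0set.
have [b [a0b eD]] := far a0; set D := Om b `\` Om a0 in eD.
have mD : measurable D by exact: measurableD.
have [a [ba [S1 [S2 [m1 m2 s1 s2 hk]]]]] := IH b.
exists a; split; first exact: le_trans a0b ba.
have sub S : S `<=` Om a `\` Om b -> S `<=` Om a `\` Om a0.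
  by move=> SS x /SS [xa xb]; split => // /(Om_iso _ _ a0b).
have Dsub : D `<=` Om a `\` Om a0.
  by move=> x [xb xa0]; split => //; exact: Om_iso _ _ ba x xb.
have disj S : S `<=` Om a `\` Om b -> S `&` D = set0.
  by move=> SS; apply/seteqP; split => // x [/SS [_ + [+ _]]].
rewrite -addn1 natrD mulrDl mul1r.
have [Dp|Dn] := lerP 0 (nu D).
  exists (S1 `|` D), S2; split; [exact: measurableU | by [] | | exact: sub | ].
  - by move=> x [/(sub _ s1)|/Dsub].
  - by rewrite nuU ?disj //; move: eD; rewrite ger0_norm //; lra.
exists S1, (S2 `|` D); split; [by [] | exact: measurableU | exact: sub | | ].
- by move=> x [/(sub _ s2)|/Dsub].
- by rewrite nuU ?disj //; move: eD; rewrite ltr0_norm //; lra.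
Qed.

Lemma isotone_bounded_additive_cauchy : net_cauchy (fun a => nu (Om a)).
Proof.
move=> e e0; apply: contrapT => noCauchy.
have far a0 : exists b, (a0 <= b)%O /\ e <= `|nu (Om b `\` Om a0)|.
  apply: contrapT => near; apply: noCauchy; exists a0 => b a0b.
  rewrite -(setDUK (Om_iso _ _ a0b)) nuU ?setDIK //; last exact: measurableD.
  by rewrite addrAC subrr add0r ltNge; apply/negP => eb; apply: near; exists b.
have [k Mk] : exists k : nat, 2 * M < k%:R * e.
  by exists (Num.truncn (2 * M / e)).+1; rewrite -ltr_pdivrMr // truncnS_gt.
case: I_dir => -[a0] _.
have [a [_ [S1 [S2 [m1 m2 _ _ oscill]]]]] := isotone_increments_unbounded far k a0.
by have := nu_bounded _ m1; have := nu_bounded _ m2; rewrite !ler_norml; lra.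
Qed.
End Isotone.

Lemma monotone_bounded_additive_cauchy (Om : I -> set T) :
  (forall a, measurable (Om a)) ->
  (forall a b, (a <= b)%O -> Om a `<=` Om b) \/
  (forall a b, (a <= b)%O -> Om b `<=` Om a) ->
  net_cauchy (fun a => nu (Om a)).
Proof.
move=> Om_meas [iso|anti]; first exact: isotone_bounded_additive_cauchy.
have OmC_meas a : measurable (~` Om a) by exact: measurableC.
have OmC_iso a b : (a <= b)%O -> ~` Om a `<=` ~` Om b by move/anti/subsetC.
have nuC a : nu (Om a) = nu setT - nu (~` Om a).
  by rewrite -(setUCr (Om a)) nuU ?setICr ?addrK.
move=> e /(isotone_bounded_additive_cauchy _ OmC_meas OmC_iso) [a0 h].
exists a0 => b /h; rewrite !nuC distrC; congr (_ < _); congr `|_|; ring.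
Qed.
End BoundedAdditiveSetFunction.

Section MultiplicationOperator.
Context {R : realType} {d : measure_display} {T : measurableType d} {X L : tvsType R}.
Context {ev : L -> T -> X} {m : set T -> L -> L}.
Hypothesis ev_inj : injective ev.
Hypothesis ev_lin : forall (a : R) (u v : L),
  ev (a *: u + v) = (fun t => a *: ev u t + ev v t).
Hypothesis m_def : forall (A : set T) (u : L), measurable A ->
  ev (m A u) = (fun t => \1_A t *: ev u t).

Let evE a u v t : ev (a *: u + v) t = a *: ev u t + ev v t.
Proof. by rewrite ev_lin. Qed.

Let evD u v t : ev (u + v) t = ev u t + ev v t.
Proof. by have := evE 1 u v t; rewrite !scale1r. Qed.

Let mE A u t : measurable A -> ev (m A u) t = \1_A t *: ev u t.
Proof. by move=> mA; rewrite m_def. Qed.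

Let ev_ext u v : (forall t, ev u t = ev v t) -> u = v.
Proof. by move=> uv; apply: ev_inj; apply: funext. Qed.

Lemma m_linear A : measurable A -> linear (m A).
Proof.
move=> mA a u v; apply: ev_ext => t.
by rewrite evE !mE // evE scalerDr !scalerA mulrC.
Qed.

Lemma m_add_setC A u : measurable A -> m A u + m (~` A) u = u.
Proof.
move=> mA; apply: ev_ext => t; rewrite evD !mE //; last exact: measurableC.
by rewrite -scalerDl !indicE in_setC; case: (t \in A); rewrite /= ?add0r ?addr0 scale1r.
Qed.

Lemma m_setI A B u : measurable A -> measurable B -> m A (m B u) = m (A `&` B) u.
Proof.
move=> mA mB; apply: ev_ext => t; rewrite !mE //; last exact: measurableI.
by rewrite scalerA indicI.
Qed.

Lemma m_setU A B u : measurable A -> measurable B -> A `&` B = set0 ->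
  m (A `|` B) u = m A u + m B u.
Proof.
move=> mA mB AB0; apply: ev_ext => t; rewrite evD !mE //; last exact: measurableU.
rewrite -scalerDl; congr (_ *: _); rewrite !indicE in_setU.
have [tA|tA] := boolP (t \in A); have [tB|tB] := boolP (t \in B);
  rewrite /= ?add0r ?addr0 //.
have : t \in A `&` B by rewrite in_setI tA tB.
by rewrite AB0 in_set0.
Qed.
End MultiplicationOperator.

Section Projection.
Context {R : realType} {d : measure_display} {T : measurableType d} {L : tvsType R}.
Context {dI : Order.disp_t} {I : porderType dI}.
Variables (m : set T -> L -> L) (Om : I -> set T).
Hypothesis m_lin : forall A, measurable A -> linear (m A).
Hypothesis m_compl : forall A u, measurable A -> m A u + m (~` A) u = u.
Hypothesis m_inter : forall A B u, measurable A -> measurable B ->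
  m A (m B u) = m (A `&` B) u.
Hypothesis m_union : forall A B u, measurable A -> measurable B -> A `&` B = set0 ->
  m (A `|` B) u = m A u + m B u.
Hypothesis m_cont : forall A, measurable A -> continuous (m A).
Hypothesis m_bnd : forall u, tvs_bounded [set m A u | A in [set A : set T | measurable A]].
Hypothesis L_barreled : barreled (E := L).
Hypothesis I_dir : directed I.
Hypothesis Om_meas : forall a, measurable (Om a).
Hypothesis Om_mono : (forall a b, (a <= b)%O -> Om a `<=` Om b) \/
                     (forall a b, (a <= b)%O -> Om b `<=` Om a).

Let mZ A a u : measurable A -> m A (a *: u) = a *: m A u.
Proof. by move=> mA; rewrite (linear_funZ (m_lin _ mA)). Qed.

Lemma dual_m_cauchy {f} u : cont_dual f -> net_cauchy (fun a => f (m (Om a) u)).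
Proof.
move=> cf; have [_ fD _] := cont_dual_linear cf.
have [C _ fC] := cont_dual_bounded cf (m_bnd u).
apply: (monotone_bounded_additive_cauchy I_dir (fun A => f (m A u)) C) => //.
- by move=> A B mA mB AB0; rewrite m_union // fD.
- by move=> A mA; apply: fC; exists A.
Qed.

Definition projection (f : L -> R) (u : L) : R :=
  xget 0 (net_cvg (fun a => f (m (Om a) u))).

Lemma projectionE {f u l} : net_cvg (fun a => f (m (Om a) u)) l -> projection f u = l.
Proof.
by move=> fl; apply: (net_cvg_unique I_dir _ fl); exact: xgetPex (ex_intro _ l fl).
Qed.

Lemma projection_cvg {f} u : cont_dual f ->
  net_cvg (fun a => f (m (Om a) u)) (projection f u).
Proof.
move=> cf; have [l fl] := net_cauchy_cvg I_dir (dual_m_cauchy u cf).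
by rewrite (projectionE fl).
Qed.

Lemma projection_fun_linear {f} : cont_dual f ->
  forall a u v, projection f (a *: u + v) = a * projection f u + projection f v.
Proof.
move=> cf a u v; have [_ fD fZ] := cont_dual_linear cf; apply: projectionE.
have -> : (fun b => f (m (Om b) (a *: u + v))) =
    (fun b => a * f (m (Om b) u) + f (m (Om b) v)).
  by apply: funext => b; rewrite m_lin // fD fZ.
by apply: (net_cvg_lin I_dir); exact: projection_cvg.
Qed.

Lemma projection_linear c f g : cont_dual f -> cont_dual g ->
  projection (fun u => c * f u + g u) = (fun u => c * projection f u + projection g u).
Proof.
move=> cf cg; apply: funext => u; apply: projectionE.
by apply: (net_cvg_lin I_dir); exact: projection_cvg.
Qed.

Lemma dual_m_barrel {f} : cont_dual f ->
  barrel [set u | forall a, `|f (m (Om a) u)| <= 1].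
Proof.
move=> cf; have [f0 fD fZ] := cont_dual_linear cf.
apply: (@preimage_barrel _ _ R^o _ (fun a u => f (m (Om a) u)) [set r | `|r| <= 1]).
- by move=> a c u v; rewrite m_lin // fD fZ.
- by move=> a u; apply: continuous_comp (m_cont _ (Om_meas a) u) (cf.2 _).
- apply: (@preimage_closed R^o R Num.norm [set x | x <= 1]); last exact: closed_le.
  by move=> *; exact: norm_continuous.
- apply/convex_setP => x y t t0 t1 /= x1 y1.
  have t1' : 0 <= 1 - t by rewrite subr_ge0.
  rewrite (le_trans (ler_normD _ _)) // !normrM (ger0_norm t0) (ger0_norm t1').
  by have := ler_wpM2l t0 x1; have := ler_wpM2l t1' y1; lra.
- by move=> l r l1 r1; rewrite /= normrM -[leRHS]mulr1 ler_pM.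
- move=> u; have [C C0 fC] := cont_dual_bounded cf (m_bnd u).
  exists C^-1; first by rewrite invr_gt0.
  move=> a l lC; rewrite /= normrM -(mulVf (lt0r_neq0 C0)) ler_pM //.
  by apply: fC; exists (Om a) => //; exact: Om_meas.
Qed.

Lemma projection_cont_dual f : cont_dual f -> cont_dual (projection f).
Proof.
move=> cf; split; first exact: projection_fun_linear.
have W0 := L_barreled _ (dual_m_barrel cf).
apply: (linear_le1_nbhs0_continuous (projection_fun_linear cf) W0).
by move=> u fu; apply: (net_cvg_norm_le I_dir fu); exact: projection_cvg.
Qed.

Lemma projection_strong_continuous : strong_dual_continuous projection.
Proof.
move=> B bB; exists [set v | exists a u, B u /\ v = m (Om a) u]; last first.
  move=> f cf f1 u Bu.
  apply: (net_cvg_norm_le I_dir (x := fun a => f (m (Om a) u))); last exact: projection_cvg.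
  by move=> a; apply: f1; exists a, u.
move=> U U0; have [C [C0 Ccl Ccvx Cbal CU]] := nbhs0_closed_convex_balanced U0.
have W_barrel : barrel [set u | forall a, C (m (Om a) u)].
  apply: preimage_barrel => // [a|a|u]; [exact: m_lin | exact: m_cont |].
  have [r r0 Cr] := m_bnd u C C0; exists r^-1; first by rewrite invr_gt0.
  move=> a l lr; have [->|l0] := eqVneq l 0.
    by rewrite scale0r; exact: nbhs_singleton.
  have rl : r <= `|l^-1|.
    by rewrite normrV ?unitfE // -(invrK r) lef_pV2 ?posrE ?invr_gt0 ?normr_gt0.
  have [c Cc <-] := Cr _ rl (m (Om a) u) (ex_intro2 _ _ (Om a) (Om_meas a) erefl).
  by rewrite scalerA mulfV // scale1r.
have [r r0 Wr] := bB _ (L_barreled _ W_barrel).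
exists r => // l lr _ [a [u [Bu ->]]].
have [w Ww <-] := Wr l lr u Bu.
by exists (m (Om a) w); [exact: CU (Ww a) | rewrite mZ].
Qed.

(* Isotone case: M_b (M_a u) = M_a u for b >= a, so P f (M_a u) = f (M_a u);
   antitone case: M_b (M_a u) = M_b u, so P f (M_a u) = P f u. *)
Lemma projection_idem f : cont_dual f -> projection (projection f) = projection f.
Proof.
move=> cf; apply: funext => u; apply: projectionE.
case: Om_mono => [iso|anti].
  have Pfm a : projection f (m (Om a) u) = f (m (Om a) u).
    apply: projectionE; apply: (net_cvg_eventually I_dir (a0 := a)) (net_cvg_cst I_dir _).
    by move=> b ab; rewrite m_inter // setIidr //; exact: iso.
  by under eq_fun do rewrite Pfm; exact: projection_cvg.
have Pfm a : projection f (m (Om a) u) = projection f u.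
  apply: projectionE; apply: (net_cvg_eventually I_dir (a0 := a)) (projection_cvg u cf).
  by move=> b ab; rewrite m_inter // setIidl //; exact: anti.
by under eq_fun do rewrite Pfm; exact: net_cvg_cst.
Qed.

Section DualSeminorm.
Variable n : L -> R.
Hypothesis n_patch : forall A u v, measurable A -> n u <= 1 -> n v <= 1 ->
  n (m A u + m (~` A) v) <= 1.

Lemma projection_patch_le f u v : cont_dual f -> n u <= 1 -> n v <= 1 ->
  ((projection f u + (f v - projection f v))%:E <= dual_seminorm n f)%E.
Proof.
move=> cf nu nv; have [_ fD _] := cont_dual_linear cf.
apply: (net_cvg_lee I_dir (x := fun a => f (m (Om a) u + m (~` Om a) v))).
  move=> a; apply: ereal_sup_ubound.
  by exists (m (Om a) u + m (~` Om a) v) => //; exact: n_patch.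
have -> : (fun a => f (m (Om a) u + m (~` Om a) v)) =
    (fun a => 1 * f (m (Om a) u) + (-1 * f (m (Om a) v) + f v)).
  apply: funext => a; rewrite -[in f v](m_compl _ v (Om_meas a)) !fD; ring.
rewrite (_ : _ + _ = 1 * projection f u + (-1 * projection f v + f v)); last by ring.
apply: (net_cvg_lin I_dir); first exact: projection_cvg.
by apply: (net_cvg_lin I_dir); [exact: projection_cvg | exact: net_cvg_cst].
Qed.

Lemma projection_dual_seminorm_split f : is_seminorm n -> cont_dual f ->
  dual_seminorm n f =
    (dual_seminorm n (projection f) + dual_seminorm n (fun u => (f u - projection f u)%R))%E.
Proof.
move=> [_ nZ] cf; apply/le_anti/andP; split.
  have fE : f = fun u => projection f u + (f u - projection f u).
    by apply: funext => u; ring.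
  by rewrite {1}fE; exact: dual_seminormD_le.
have n0 : n 0 <= 1 by have := nZ 0 0; rewrite scale0r normr0 mul0r => ->.
by apply: dual_seminorm_add_le => // u v nu nv; exact: projection_patch_le.
Qed.
End DualSeminorm.
End Projection.

Theorem propositionA1
  (R : realType) (d : measure_display) (T : measurableType d)
  (mu : {measure set T -> \bar R})
  (X : tvsType R) (L : tvsType R)
  (* L is a space of measurable functions T -> X: ev identifies u with a function *)
  (ev : L -> T -> X)
  (ev_inj : injective ev)
  (ev_lin : forall (a : R) (u v : L),
      ev (a *: u + v) = (fun t => a *: ev u t + ev v t))
  (ev_meas : forall u : L, top_measurable_fun (ev u))
  (* (a) *)
  (L_barreled : barreled (E := L))
  (* (b) u |-> \1_A u is defined (as m A) and continuous *)
  (m : set T -> L -> L)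
  (m_def : forall (A : set T) (u : L), measurable A ->
      ev (m A u) = (fun t => \1_A t *: ev u t))
  (m_cont : forall A : set T, measurable A -> continuous (m A))
  (* (c) *)
  (m_bnd : forall u : L, tvs_bounded [set m A u | A in [set A : set T | measurable A]])
  (* the isotone or antitone net *)
  (dI : Order.disp_t) (I : porderType dI) (I_dir : directed I)
  (Om : I -> set T) (Om_meas : forall a : I, measurable (Om a))
  (Om_mono : (forall a b : I, (a <= b)%O -> Om a `<=` Om b) \/
             (forall a b : I, (a <= b)%O -> Om b `<=` Om a)) :
  (forall a : I, linear (m (Om a)) /\ continuous (m (Om a))) /\
  exists P : (L -> R) -> (L -> R),
    [/\ (forall f, cont_dual f -> cont_dual (P f)) /\
        (forall (c : R) f g, cont_dual f -> cont_dual g ->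
           P (fun u => c * f u + g u) = (fun u => c * P f u + P g u)),
        strong_dual_continuous P,
        (forall f, cont_dual f -> P (P f) = P f),
        (forall f, cont_dual f -> forall u : L,
           net_cvg (fun a : I => f (m (Om a) u)) (P f u)) &
        (forall n : L -> R, is_seminorm n ->
           (forall (A : set T) (u v : L), measurable A -> n u <= 1 -> n v <= 1 ->
              n (m A u + m (~` A) v) <= 1) ->
           forall f, cont_dual f ->
             dual_seminorm n f =
               (dual_seminorm n (P f) + dual_seminorm n (fun u => (f u - P f u)%R))%E)].
Proof.
have m_lin := m_linear ev_inj ev_lin m_def.
have m_compl := m_add_setC ev_inj ev_lin m_def.
have m_inter := m_setI ev_inj m_def.
have m_union := m_setU ev_inj ev_lin m_def.
split=> [a|]; first by split; [exact: m_lin | exact: m_cont].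
exists (projection m Om); split.
- split=> [f|c f g]; [exact: projection_cont_dual | exact: projection_linear].
- exact: projection_strong_continuous.
- by move=> f; exact: projection_idem.
- by move=> f cf u; exact: projection_cvg.
- by move=> n n_sem n_patch f; exact: projection_dual_seminorm_split.
Qed.
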